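(* Let $\mathsf V$ be a variety in which every 1-generated exact algebra is projective. Then for every algebraic e-generalization problem $h$ for $\mathsf V$, $\mathscr G(h)=\{\theta\in\mathrm{Con}(\mathbf F_{\mathsf V}(z)):\theta\subseteq\ker(h),\ \theta \text{ projective in } \mathsf V\}$.
   Context: $\mathbf F_{\mathsf V}(z)$ is the free algebra of the variety $\mathsf V$ on one generator $z$, and $\mathrm{Con}(\mathbf F_{\mathsf V}(z))$ its congruence lattice. An algebra is projective in $\mathsf V$ iff it is a retract of a free algebra of $\mathsf V$; it is exact in $\mathsf V$ if isomorphic to a finitely generated subalgebra of a finitely generated free algebra of $\mathsf V$. A congruence $\theta$ of $\mathbf F_{\mathsf V}(z)$ is projective if $\mathbf F_{\mathsf V}(z)/\theta$ is projective in $\mathsf V$. An algebraic e-generalization problem is a homomorphism $h:\mathbf F_{\mathsf V}(z)\to\prod_{k=1}^m\mathbf E_k$ with each $\mathbf E_k$ a 1-generated exact algebra and $p_k\circ h$ surjective for each projection $p_k$. A solution of $h$ is a homomorphism $g:\mathbf F_{\mathsf V}(z)\to\mathbf P$ with $\mathbf P$ finitely generated and projective such that $f\circ g=h$ for some homomorphism $f$. $\mathscr G(h)=\{\ker(g): g\text{ a solution of } h\}$. *)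

From Stdlib Require Import ClassicalEpsilon.
From mathcomp Require Import all_boot.
Set Implicit Arguments. Unset Strict Implicit. Unset Printing Implicit Defensive.

Record signature := Signature { op : Type; arity : op -> nat }.

Record algebra (S : signature) := Algebra {
  carrier :> Type;
  interp : forall o : op S, ('I_(arity o) -> carrier) -> carrier }.
Arguments interp {S} a o _ : rename.
Arguments Algebra {S} carrier interp : rename.

Inductive term (S : signature) (X : Type) : Type :=
| Var : X -> term S X
| App : forall o : op S, ('I_(arity o) -> term S X) -> term S X.
Arguments Var {S X} _.
Arguments App {S X} o _.

Fixpoint eval (S : signature) (X : Type) (A : algebra S) (v : X -> A)
  (t : term S X) : A :=
  match t with
  | Var x => v x
  | App o args => interp A o (fun i => @eval _ _ A v (args i))
  end.
Arguments eval {S X} A v t.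

(* A variety is given by a set of identities (Birkhoff: varieties = equational classes). *)
Record variety := Variety {
  vsig : signature;
  identities : term vsig nat -> term vsig nat -> Prop }.
Arguments identities : clear implicits.

Definition in_var (V : variety) (A : algebra (vsig V)) : Prop :=
  forall s t, identities V s t -> forall v : nat -> A, eval A v s = eval A v t.

Definition is_hom (S : signature) (A B : algebra S) (f : A -> B) : Prop :=
  forall (o : op S) (args : 'I_(arity o) -> A),
    f (interp A o args) = interp B o (fun i => f (args i)).

(* Quotients by an (equivalence) relation, as sets of classes. *)
Definition quot (T : Type) (R : T -> T -> Prop) : Type :=
  {P : T -> Prop | exists t, P = R t}.
Definition qcls (T : Type) (R : T -> T -> Prop) (t : T) : quot R :=
  exist (fun P => exists t, P = R t) (R t) (ex_intro _ t erefl).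
Definition qrepr (T : Type) (R : T -> T -> Prop) (q : quot R) : T :=
  proj1_sig (constructive_indefinite_description _ (proj2_sig q)).

(* Free algebra F_V(X): terms modulo the identities valid in V. *)
Definition veq (V : variety) (X : Type) (s t : term (vsig V) X) : Prop :=
  forall A : algebra (vsig V), in_var A ->
    forall v : X -> A, eval A v s = eval A v t.

Definition free_alg (V : variety) (X : Type) : algebra (vsig V) :=
  @Algebra (vsig V) (quot (@veq V X))
    (fun o args => qcls (@veq V X) (App o (fun i => qrepr (args i)))).

Definition congruence (S : signature) (A : algebra S) (th : A -> A -> Prop) : Prop :=
  [/\ (forall x, th x x), (forall x y, th x y -> th y x),
      (forall x y z, th x y -> th y z -> th x z) &
      (forall (o : op S) (a b : 'I_(arity o) -> A),
          (forall i, th (a i) (b i)) -> th (interp A o a) (interp A o b))].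

Definition quot_alg (S : signature) (A : algebra S) (th : A -> A -> Prop) : algebra S :=
  @Algebra S (quot th) (fun o args => qcls th (interp A o (fun i => qrepr (args i)))).

Definition retract (S : signature) (A B : algebra S) : Prop :=
  exists (i : A -> B) (r : B -> A), [/\ is_hom i, is_hom r & forall x, r (i x) = x].

Definition projective (V : variety) (A : algebra (vsig V)) : Prop :=
  exists X : Type, retract A (free_alg V X).

Definition fin_gen (S : signature) (A : algebra S) : Prop :=
  exists (k : nat) (g : 'I_k -> A), forall x, exists t : term S 'I_k, x = eval A g t.

Definition one_gen (S : signature) (A : algebra S) : Prop :=
  exists a : A, forall x, exists t : term S unit, x = eval A (fun _ => a) t.

(* Exact in V: isomorphic to the subalgebra of some F_V(n) generated by finitely
   many elements g_1..g_k (i.e. an injective homomorphism onto that subalgebra). *)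
Definition exact (V : variety) (A : algebra (vsig V)) : Prop :=
  exists (n k : nat) (g : 'I_k -> free_alg V 'I_n) (e : A -> free_alg V 'I_n),
    [/\ is_hom e, injective e &
        forall y, (exists x, e x = y) <-> (exists t : term (vsig V) 'I_k, y = eval _ g t)].

Definition prod_alg (S : signature) (m : nat) (E : 'I_m -> algebra S) : algebra S :=
  @Algebra S (forall k : 'I_m, E k)
    (fun o args => fun k => interp (E k) o (fun i => args i k)).

Definition egen_problem (V : variety) (m : nat) (E : 'I_m -> algebra (vsig V))
  (h : free_alg V unit -> prod_alg E) : Prop :=
  [/\ forall k, exact (E k) /\ one_gen (E k),
      is_hom h &
      forall k (y : E k), exists x, h x k = y].

Definition is_solution (V : variety) (m : nat) (E : 'I_m -> algebra (vsig V))
  (h : free_alg V unit -> prod_alg E) (P : algebra (vsig V))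
  (g : free_alg V unit -> P) : Prop :=
  [/\ fin_gen P, projective P, is_hom g &
      exists f : P -> prod_alg E, is_hom f /\ forall x, f (g x) = h x].

Definition Gset (V : variety) (m : nat) (E : 'I_m -> algebra (vsig V))
  (h : free_alg V unit -> prod_alg E)
  (th : free_alg V unit -> free_alg V unit -> Prop) : Prop :=
  exists (P : algebra (vsig V)) (g : free_alg V unit -> P),
    is_solution h g /\ th = (fun x y => g x = g y).

(* The quotient of F(z) by the kernel of a solution g : F(z) -> P is isomorphic
   to the subalgebra of P generated by g z. A finitely generated retract P of a
   free algebra is already a retract of some F(k), because free algebras are
   projective; so F(z)/ker g embeds in F(k) as the subalgebra generated by one
   element, i.e. it is 1-generated and exact, hence projective by hypothesis.
   Conversely, a projective congruence below ker h is the kernel of the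
   solution F(z) -> F(z)/theta, through which h factors. *)
From Stdlib Require Import ClassicalEpsilon FunctionalExtensionality.
From Stdlib Require Import PropExtensionality ProofIrrelevance RelationClasses.
From mathcomp Require Import all_boot.
Set Implicit Arguments. Unset Strict Implicit. Unset Printing Implicit Defensive.

Section Quotient.
Variables (T : Type) (R : T -> T -> Prop).

Lemma qreprK (q : quot R) : qcls R (qrepr q) = q.
Proof.
case: q => P HP; apply: eq_sig_hprop => [? ? ?|]; first exact: proof_irrelevance.
by rewrite /qrepr; case: constructive_indefinite_description => t Pt /=.
Qed.

Hypothesis R_equiv : Equivalence R.

Lemma qcls_eq x y : qcls R x = qcls R y <-> R x y.
Proof.
split=> [/(f_equal (@proj1_sig _ _)) /= ->|Rxy]; first reflexivity.
apply: eq_sig_hprop => [? ? ?|/=]; first exact: proof_irrelevance.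
apply: functional_extensionality => z; apply: propositional_extensionality.
by split=> ?; [transitivity x; first symmetry|transitivity y].
Qed.

Lemma qrepr_qcls x : R x (qrepr (qcls R x)).
Proof. by apply/qcls_eq; rewrite qreprK. Qed.

End Quotient.

Section Algebra.
Variable S : signature.
Implicit Types A B : algebra S.

Fixpoint subst X Y (s : X -> term S Y) (t : term S X) : term S Y :=
  match t with
  | Var x => s x
  | App o a => App o (fun i => subst s (a i))
  end.

Lemma eval_subst X Y A (v : Y -> A) (s : X -> term S Y) t :
  eval A v (subst s t) = eval A (fun x => eval A v (s x)) t.
Proof.
elim: t => [//|o a IH] /=.
by congr (interp A o); apply: functional_extensionality.
Qed.

Lemma subst_Var X (t : term S X) : subst Var t = t.
Proof.
elim: t => [//|o a IH] /=.
by congr (App o); apply: functional_extensionality.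
Qed.

Lemma eval_hom A B (f : A -> B) X (v : X -> A) t :
  is_hom f -> f (eval A v t) = eval B (f \o v) t.
Proof.
move=> f_hom; elim: t => [//|o a IH] /=.
by rewrite f_hom; congr (interp B o); apply: functional_extensionality.
Qed.

Lemma congruence_equiv A (th : A -> A -> Prop) : congruence th -> Equivalence th.
Proof. by case=> refl sym trans _; split. Qed.

Lemma kernel_congruence A B (f : A -> B) :
  is_hom f -> congruence (fun x y => f x = f y).
Proof.
move=> f_hom; split=> [//|x y ->|x y z -> ->|o a b ab]//.
by rewrite !f_hom; congr (interp B o); apply: functional_extensionality.
Qed.

Lemma qcls_hom A (th : A -> A -> Prop) :
  congruence th -> is_hom (B := quot_alg th) (qcls th).
Proof.
move=> th_cong o a; have th_equiv := congruence_equiv th_cong.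
apply/qcls_eq; case: th_cong => _ _ _; apply=> i; exact: qrepr_qcls.
Qed.

Lemma quot_factor A B (th : A -> A -> Prop) (f : A -> B) :
  congruence th -> is_hom f -> (forall x y, th x y -> f x = f y) ->
  exists f' : quot_alg th -> B, is_hom f' /\ forall x, f' (qcls th x) = f x.
Proof.
move=> th_cong f_hom th_f; have th_equiv := congruence_equiv th_cong.
have f_qcls x : f (qrepr (qcls th x)) = f x by symmetry; apply: th_f; apply: qrepr_qcls.
exists (fun q => f (qrepr q)); split=> // o a /=.
by rewrite f_qcls f_hom.
Qed.

Lemma quot_kernel_embedding A B (f : A -> B) : is_hom f ->
  exists e : quot_alg (fun x y => f x = f y) -> B, is_hom e /\ injective e.
Proof.
move=> f_hom; have ker_cong := kernel_congruence f_hom.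
have [e [e_hom e_f]] := quot_factor ker_cong f_hom (fun x y => id).
exists e; split=> // q1 q2.
rewrite -(qreprK q1) -(qreprK q2) !e_f => f12.
exact/(qcls_eq (congruence_equiv ker_cong)).
Qed.

Definition generates A (a : A) : Prop :=
  forall x, exists t : term S unit, x = eval A (fun _ => a) t.

Lemma generates_over A (a : A) Y (y : Y) : generates a ->
  forall x, exists t : term S Y, x = eval A (fun _ => a) t.
Proof.
move=> a_gen x; have [t ->] := a_gen x.
by exists (subst (fun _ => Var y) t); rewrite eval_subst.
Qed.

Lemma one_gen_fin_gen A : one_gen A -> fin_gen A.
Proof. by case=> a a_gen; exists 1, (fun _ => a); apply: generates_over ord0 a_gen. Qed.

Lemma one_gen_hom_image A B (f : A -> B) :
  is_hom f -> (forall y, exists x, f x = y) -> one_gen A -> one_gen B.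
Proof.
move=> f_hom f_surj [a a_gen]; exists (f a) => y.
have [x <-] := f_surj y; have [t ->] := a_gen x.
by exists t; rewrite (eval_hom _ _ f_hom).
Qed.

Lemma one_gen_quot A (th : A -> A -> Prop) :
  congruence th -> one_gen A -> one_gen (quot_alg th).
Proof.
move=> th_cong; apply: one_gen_hom_image (qcls_hom th_cong) _ => q.
by exists (qrepr q); rewrite qreprK.
Qed.

End Algebra.

Section FreeAlgebra.
Variables (V : variety) (X : Type).
Local Notation F := (free_alg V X).
Local Notation cls := (qcls (@veq V X)).

Lemma veq_equiv : Equivalence (@veq V X).
Proof.
split=> [t A _ v //|s t st A A_V v|s t u st tu A A_V v].
  by rewrite (st A A_V v).
by rewrite (st A A_V v) (tu A A_V v).
Qed.

Lemma interp_cls o (a : 'I_(arity o) -> term (vsig V) X) :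
  interp F o (cls \o a) = cls (App o a).
Proof.
apply/(qcls_eq veq_equiv) => A A_V v /=; congr (interp A o).
apply: functional_extensionality => i.
by symmetry; apply: (qrepr_qcls veq_equiv).
Qed.

Lemma eval_cls Y (s : Y -> term (vsig V) X) t :
  eval F (cls \o s) t = cls (subst s t).
Proof.
elim: t => [//|o a IH]; rewrite -interp_cls /=.
by congr (interp F o); apply: functional_extensionality.
Qed.

Lemma in_var_free : in_var F.
Proof.
move=> s t st v.
have -> : v = cls \o (fun n => qrepr (v n)).
  by apply: functional_extensionality => n /=; rewrite qreprK.
rewrite !eval_cls; apply/(qcls_eq veq_equiv) => A A_V w.
by rewrite !eval_subst; apply: A_V.
Qed.

Lemma free_generated q : q = eval F (cls \o Var) (qrepr q).
Proof. by rewrite eval_cls subst_Var qreprK. Qed.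

Lemma free_hom_eq (B : algebra (vsig V)) (f f' : F -> B) : is_hom f -> is_hom f' ->
  (forall x, f (cls (Var x)) = f' (cls (Var x))) -> forall q, f q = f' q.
Proof.
move=> f_hom f'_hom f_f' q; rewrite (free_generated q).
by rewrite !(eval_hom _ _ f_hom) !(eval_hom _ _ f'_hom); congr eval;
  apply: functional_extensionality.
Qed.

Definition free_ext (A : algebra (vsig V)) (a : X -> A) (q : F) : A :=
  eval A a (qrepr q).

Section Extension.
Variables (A : algebra (vsig V)) (A_V : in_var A) (a : X -> A).

Lemma free_ext_cls t : free_ext a (cls t) = eval A a t.
Proof. by symmetry; apply: (qrepr_qcls veq_equiv). Qed.

Lemma free_ext_hom : is_hom (free_ext a).
Proof. by move=> o args /=; rewrite free_ext_cls. Qed.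

End Extension.

Lemma retract_in_var (P : algebra (vsig V)) : retract P F -> in_var P.
Proof.
case=> i [r [i_hom r_hom ri]] s t st v.
rewrite -(ri (eval P v s)) -(ri (eval P v t)) !(eval_hom _ _ i_hom).
by rewrite (in_var_free st).
Qed.

Lemma free_projective (B C : algebra (vsig V)) (phi : B -> C) (r : F -> C) :
  in_var B -> is_hom phi -> (forall y, exists x, phi x = y) -> is_hom r ->
  exists psi : F -> B, is_hom psi /\ forall q, phi (psi q) = r q.
Proof.
move=> B_V phi_hom phi_surj r_hom.
have /choice [c phi_c] : forall x, exists b, phi b = r (cls (Var x)).
  by move=> x; apply: phi_surj.
exists (free_ext c); split; first exact: free_ext_hom.
apply: free_hom_eq => [o args|//|x]; last by rewrite (free_ext_cls B_V); apply: phi_c.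
by rewrite (free_ext_hom B_V) phi_hom.
Qed.

End FreeAlgebra.

Lemma free_one_gen (V : variety) : one_gen (free_alg V unit).
Proof.
exists (qcls (@veq V unit) (Var tt)) => q; exists (qrepr q).
rewrite {1}(free_generated q); congr eval.
by apply: functional_extensionality => -[].
Qed.

Lemma fin_gen_free_surj (V : variety) (P : algebra (vsig V)) :
  in_var P -> fin_gen P ->
  exists k (phi : free_alg V 'I_k -> P),
    is_hom phi /\ forall y, exists x, phi x = y.
Proof.
move=> P_V [k [p p_gen]]; exists k, (free_ext p); split; first exact: free_ext_hom.
move=> y; have [t ->] := p_gen y.
by exists (qcls (@veq V 'I_k) t); rewrite free_ext_cls.
Qed.

Lemma fin_gen_projective_retract (V : variety) (P : algebra (vsig V)) :
  fin_gen P -> projective P -> exists k, retract P (free_alg V 'I_k).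
Proof.
move=> P_fg [X P_retract]; have P_V := retract_in_var P_retract.
case: P_retract => i [r [i_hom r_hom ri]].
have [k [phi [phi_hom phi_surj]]] := fin_gen_free_surj P_V P_fg.
have [psi [psi_hom phi_psi]] :=
  free_projective (@in_var_free V 'I_k) phi_hom phi_surj r_hom.
exists k, (psi \o i), phi; split=> [o a|//|x] /=.
  by rewrite i_hom psi_hom.
by rewrite phi_psi ri.
Qed.

Lemma retract_embedding S (A B : algebra S) :
  retract A B -> exists e : A -> B, is_hom e /\ injective e.
Proof. by case=> i [r [i_hom _ ri]]; exists i; split=> //; apply: can_inj ri. Qed.

Lemma exact_of_embedding (V : variety) (A : algebra (vsig V)) n
    (e : A -> free_alg V 'I_n) :
  one_gen A -> is_hom e -> injective e -> exact A.
Proof.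
case=> a a_gen e_hom e_inj; exists n, 1, (fun _ => e a), e; split=> // y.
split=> [[x <-]|[t ->]].
  have [t ->] := generates_over (ord0 : 'I_1) a_gen x.
  by exists t; rewrite (eval_hom _ _ e_hom).
by exists (eval A (fun _ => a) t); rewrite (eval_hom _ _ e_hom).
Qed.

Theorem corollary4p7 (V : variety)
  (Hproj : forall A : algebra (vsig V), one_gen A -> exact A -> projective A)
  (m : nat) (E : 'I_m -> algebra (vsig V)) (h : free_alg V unit -> prod_alg E)
  (Hh : egen_problem h)
  (th : free_alg V unit -> free_alg V unit -> Prop) :
  Gset h th <->
  [/\ congruence th, (forall x y, th x y -> h x = h y) & projective (quot_alg th)].
Proof.
case: Hh => _ h_hom _; have F1 := free_one_gen V.
split=> [[P [g [[P_fg P_proj g_hom [f [f_hom fg]]] ->]]]|[th_cong th_h th_proj]].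
  have ker_cong := kernel_congruence g_hom.
  have ker_gen := one_gen_quot ker_cong F1.
  split=> // [x y gxy|]; first by rewrite -!fg gxy.
  have [k /retract_embedding [e [e_hom e_inj]]] :=
    fin_gen_projective_retract P_fg P_proj.
  have [e' [e'_hom e'_inj]] := quot_kernel_embedding g_hom.
  apply: Hproj ker_gen (exact_of_embedding (e := e \o e') ker_gen _ _).
    by move=> o a /=; rewrite e'_hom e_hom.
  exact: inj_comp.
have th_equiv := congruence_equiv th_cong.
exists (quot_alg th), (qcls th); split.
  split; first exact/one_gen_fin_gen/one_gen_quot.
  - exact: th_proj.
  - exact: qcls_hom.
  - exact: quot_factor th_cong h_hom th_h.
apply: functional_extensionality => x; apply: functional_extensionality => y.
by apply: propositional_extensionality; rewrite qcls_eq.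
Qed.
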